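(* Let $n,p$ be positive integers with $p<n/2$. Let $\boldsymbol{X}\in\mathbb{R}^{n\times p}$ and $\boldsymbol{Z}\in\mathbb{R}^n$ be deterministic, and let $\boldsymbol{Y}=\boldsymbol{X}\beta+b\boldsymbol{Z}+\boldsymbol{\varepsilon}$ for some $\beta\in\mathbb{R}^p$, $b\in\mathbb{R}$, where the noise vector $\boldsymbol{\varepsilon}=(\varepsilon_1,\ldots,\varepsilon_n)^\top$ has exchangeable components, i.e. $(\varepsilon_1,\ldots,\varepsilon_n)\overset{d}{=}(\varepsilon_{\sigma(1)},\ldots,\varepsilon_{\sigma(n)})$ for every permutation $\sigma$ of $\{1,\ldots,n\}$. Let $\boldsymbol{P}_0=\boldsymbol{I},\boldsymbol{P}_1,\ldots,\boldsymbol{P}_K$ be fixed distinct $n\times n$ permutation matrices such that for all $i,j\in\{0,\ldots,K\}$ there is $k\in\{0,\ldots,K\}$ with $\boldsymbol{P}_k=\boldsymbol{P}_i\boldsymbol{P}_j$. Let $T:\mathbb{R}^{n-2p}\times\mathbb{R}^{n-2p}\to\mathbb{R}$ be any fixed function, and let $\phi$ be defined as in the context. Then, if $b=0$, $\phi$ is a valid p-value: $\mathbb{P}(\phi\le\alpha)\le\alpha$ for all $\alpha\in[0,1]$.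
   Context: Let $\boldsymbol{V}_0\in\mathbb{R}^{n\times(n-p)}$ be a matrix with orthonormal columns spanning an $(n-p)$-dimensional subspace of $\mathrm{span}(\boldsymbol{X})^\perp$ (the orthogonal complement of the column space of $\boldsymbol{X}$), and set $\boldsymbol{V}_k:=\boldsymbol{P}_k\boldsymbol{V}_0$. For $k=1,\ldots,K$ let $\tilde{\boldsymbol{V}}_k\in\mathbb{R}^{n\times(n-2p)}$ be a matrix with orthonormal columns spanning a subspace of $\mathrm{span}(\boldsymbol{V}_0)\cap\mathrm{span}(\boldsymbol{V}_k)$. The residual permutation test p-value is $$\phi:=\frac{1}{K+1}\Bigl(1+\sum_{k=1}^K\mathbb{1}\Bigl\{\min_{\tilde{\boldsymbol{V}}\in\{\tilde{\boldsymbol{V}}_1,\ldots,\tilde{\boldsymbol{V}}_K\}}T\bigl(\tilde{\boldsymbol{V}}^\top\boldsymbol{Z},\tilde{\boldsymbol{V}}^\top\boldsymbol{Y}\bigr)\le T\bigl(\tilde{\boldsymbol{V}}_k^\top\boldsymbol{Z},\tilde{\boldsymbol{V}}_k^\top\boldsymbol{P}_k\boldsymbol{Y}\bigr)\Bigr\}\Bigr).$$ *)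

From HB Require Import structures.
From mathcomp Require Import all_boot all_order all_algebra all_fingroup.
From mathcomp Require Import all_classical all_reals all_analysis.

Set Implicit Arguments.
Unset Strict Implicit.
Unset Printing Implicit Defensive.

Import Order.TTheory GRing.Theory Num.Theory.
Local Open Scope classical_set_scope.
Local Open Scope ring_scope.

Section Defs.
Context {R : realType}.

(* A tuple of reals (an element of R^n, equipped with the product Borel
   sigma-algebra of MathComp-Analysis) seen as a column vector. *)
Definition tcol (n : nat) (t : n.-tuple R) : 'cV[R]_n := \col_i tnth t i.

Definition permute_tuple (n : nat) (s : 'S_n) (t : n.-tuple R) : n.-tuple R :=
  [tuple tnth t (s i) | i < n].

Definition exchangeable d (Omega : measurableType d) (P : probability Omega R)
    (n : nat) (eps : Omega -> n.-tuple R) : Prop :=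
  forall (s : 'S_n) (A : set (n.-tuple R)), measurable A ->
    P (eps @^-1` A) = P ((permute_tuple s \o eps) @^-1` A).

Definition Tobs (n m K : nat) (T : 'cV[R]_m -> 'cV[R]_m -> R)
    (Vt : 'I_K.+1 -> 'M[R]_(n, m)) (Z Y : 'cV[R]_n) (k : 'I_K.+1) : R :=
  T ((Vt k)^T *m Z) ((Vt k)^T *m Y).

(* The big operator
   needs a neutral element; we use the value at k0 which itself belongs to
   the (nonempty) family when k0 != 0, so the result is the genuine minimum. *)
Definition Tmin (n m K : nat) (T : 'cV[R]_m -> 'cV[R]_m -> R)
    (Vt : 'I_K.+1 -> 'M[R]_(n, m)) (Z Y : 'cV[R]_n) (k0 : 'I_K.+1) : R :=
  \big[Num.min/Tobs T Vt Z Y k0]_(k' < K.+1 | k' != ord0) Tobs T Vt Z Y k'.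

Definition rpt_pvalue (n m K : nat) (T : 'cV[R]_m -> 'cV[R]_m -> R)
    (P : 'I_K.+1 -> 'M[R]_n) (Vt : 'I_K.+1 -> 'M[R]_(n, m))
    (Z Y : 'cV[R]_n) : R :=
  (1 + \sum_(k < K.+1 | k != ord0)
         (Tmin T Vt Z Y k <= T ((Vt k)^T *m Z) ((Vt k)^T *m (P k *m Y)))%R%:R)
  / (K.+1)%:R.

End Defs.

(* Since every V~_k annihilates both X and P_k X, phi depends on Y only through
   the noise, and it dominates the rank p-value
   psi v = #{k : S v <= S (P_k v)} / (K + 1) of the statistic
   S v = min_k T(V~_k^T Z, V~_k^T v).  As the P_k form a group, multiplying by
   P_j merely permutes the orbit {P_k v}, so at most alpha (K + 1) of the points
   P_j v of an orbit have psi <= alpha.  By exchangeability every P_j eps has the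
   law of eps, and averaging over j gives P(psi eps <= alpha) <= alpha. *)

From HB Require Import structures.
From mathcomp Require Import all_boot all_order all_algebra all_fingroup.
From mathcomp Require Import all_classical all_reals all_analysis.
From mathcomp Require Import measurable_realfun.

Import Order.TTheory GRing.Theory Num.Theory.
Local Open Scope classical_set_scope.
Local Open Scope ring_scope.

Set Implicit Arguments.
Unset Strict Implicit.

Section TupleColumn.
Context {R : realType}.

Definition coltuple (m : nat) (c : 'cV[R]_m) : m.-tuple R := [tuple c i 0 | i < m].

Lemma coltupleK m : cancel (@coltuple m) (@tcol R m).
Proof. by move=> c; apply/matrixP => i j; rewrite !mxE tnth_mktuple (ord1 j). Qed.

Lemma tcolK m : cancel (@tcol R m) (@coltuple m).
Proof. by move=> t; apply: eq_from_tnth => i; rewrite tnth_mktuple mxE. Qed.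

Lemma tcol_permute n (s : 'S_n) (t : n.-tuple R) :
  tcol (permute_tuple s t) = perm_mx s *m tcol t.
Proof. by apply/matrixP => i j; rewrite -row_permE !mxE !tnth_mktuple. Qed.

Lemma measurable_mulmx_tcol n m (M : 'M[R]_(m, n)) :
  measurable_fun setT (fun t : n.-tuple R => coltuple (M *m tcol t)).
Proof.
apply/measurable_fun_tnthP => i.
rewrite (_ : _ \o _ = fun t => \sum_(j <- index_enum 'I_n) M i j * tnth t j).
  by apply: measurable_sum => j; apply: measurableT_comp => //; exact: measurable_tnth.
apply/funext => t /=; rewrite tnth_mktuple !mxE.
by apply: eq_bigr => j _; rewrite mxE.
Qed.

Lemma measurable_permute_tuple n (s : 'S_n) :
  measurable_fun setT (@permute_tuple R n s).
Proof.
rewrite (_ : permute_tuple s = fun t => coltuple (perm_mx s *m tcol t)).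
  exact: measurable_mulmx_tcol.
by apply/funext => t; rewrite -tcol_permute tcolK.
Qed.

Lemma measurable_fun_partial_mulmx n m (T : 'cV[R]_m -> 'cV[R]_m -> R) a
    (M : 'M[R]_(m, n)) :
  measurable_fun [set: m.-tuple R * m.-tuple R] (fun uv => T (tcol uv.1) (tcol uv.2)) ->
  measurable_fun setT (fun t : n.-tuple R => T a (M *m tcol t)).
Proof.
move=> mT.
rewrite (_ : (fun t => _) = (fun uv => T (tcol uv.1) (tcol uv.2))
                             \o (fun t => (coltuple a, coltuple (M *m tcol t)))).
  apply: measurableT_comp => //; apply: measurable_fun_pair => //.
  exact: measurable_mulmx_tcol.
by apply/funext => t /=; rewrite !coltupleK.
Qed.

End TupleColumn.

Section RealMeasurable.
Context {R : realType} d (U : measurableType d).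

Lemma measurable_fun_bigmin (I : eqType) (r : seq I) (Q : pred I)
    (F : I -> U -> R) (f0 : U -> R) :
  measurable_fun setT f0 -> (forall i, measurable_fun setT (F i)) ->
  measurable_fun setT (fun x => \big[Num.min/f0 x]_(i <- r | Q i) F i x).
Proof.
move=> mf0 mF; elim: r => [|i r IHr]; first by under eq_fun do rewrite big_nil.
under eq_fun do rewrite big_cons.
by case: (Q i) => //; exact: measurable_minr.
Qed.

Lemma measurable_fun_ler_natr (f g : U -> R) :
  measurable_fun setT f -> measurable_fun setT g ->
  measurable_fun setT (fun x => (f x <= g x)%R%:R : R).
Proof.
move=> mf mg.
rewrite (_ : (fun x => _) = (fun x => if f x <= g x then 1 else 0)).
  by apply: measurable_fun_ifT => //; exact: measurable_fun_ler.
by apply/funext => x; case: ifP.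
Qed.

Lemma measurable_ler_set (f : U -> R) (a : R) :
  measurable_fun setT f -> measurable [set x | f x <= a].
Proof. by move=> mf; rewrite -[X in measurable X]setTI; exact: measurable_fun_le. Qed.

Lemma sum_probability_le (Pr : probability U R) N (B : 'I_N -> set U) (c : R) :
  (forall j, measurable (B j)) ->
  (forall x, \sum_(j < N) (\1_(B j) x : R) <= c) ->
  (\sum_(j < N) Pr (B j) <= c%:E)%E.
Proof.
move=> mB hc.
have PrE j : Pr (B j) = (\int[Pr]_(x in setT) (\1_(B j) x)%:E)%E.
  by rewrite integral_indic // setIT.
under eq_bigr do rewrite PrE.
rewrite -(@ge0_integral_sum _ _ _ Pr setT measurableT _
           (fun j x => (\1_(B j) x)%:E)); last first.
- by move=> j x _; rewrite lee_fin indicE ler0n.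
- by move=> j; apply: measurableT_comp => //; exact: measurable_indic.
apply: le_trans (_ : (\int[Pr]_(x in setT) (cst c%:E x) <= _)%E); last first.
  by rewrite integral_cst // [_ setT]probability_setT mule1.
apply: ge0_le_integral => //.
- by move=> x _; rewrite sume_ge0 // => j _; rewrite lee_fin indicE ler0n.
- under eq_fun do rewrite sumEFin.
  by apply: measurableT_comp => //; apply: measurable_sum => j; exact: measurable_indic.
- by move=> x _; rewrite sumEFin lee_fin.
Qed.

End RealMeasurable.

(* The indices counted on the left all lie above the smallest of them, which
   has at least as many [k] above it. *)
Lemma sum_upper_rank_le {R : realDomainType} N (m : 'I_N -> R) (c : R) : 0 <= c ->
  \sum_(j < N) ((\sum_(k < N) (m j <= m k)%R%:R) <= c)%R%:R <= c.
Proof.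
move=> c0; pose small j := (\sum_(k < N) (m j <= m k)%R%:R) <= c.
case: (pickP small) => [j0 small_j0|none]; last first.
  by rewrite big1 // => j _; rewrite -/(small j) none.
case: (@arg_minP _ R _ j0 small m small_j0) => jmin small_jmin jmin_min.
apply: le_trans small_jmin; apply: ler_sum => j _; rewrite -/(small j).
by have [/jmin_min ->|_] := boolP (small j); rewrite ?ler0n.
Qed.

Lemma tr_perm_mx_mul {R : pzRingType} n (s : 'S_n) :
  (perm_mx s)^T *m perm_mx s = 1%:M :> 'M[R]_n.
Proof. by rewrite tr_perm_mx -perm_mxM mulVg perm_mx1. Qed.

Lemma perm_mx_mul_tr {R : pzRingType} n (s : 'S_n) :
  perm_mx s *m (perm_mx s)^T = 1%:M :> 'M[R]_n.
Proof. by rewrite tr_perm_mx -perm_mxM mulgV perm_mx1. Qed.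

Section RankTest.
Context {R : realType} (n K : nat) (P : 'I_K.+1 -> 'M[R]_n) (S : 'cV[R]_n -> R).

Definition rank_pvalue (v : 'cV[R]_n) : R :=
  (\sum_(k < K.+1) (S v <= S (P k *m v))%R%:R) / (K.+1)%:R.

Variables (sigma : 'I_K.+1 -> 'S_n) (mul : 'I_K.+1 -> 'I_K.+1 -> 'I_K.+1).
Hypothesis P_sigma : forall k, P k = perm_mx (sigma k).
Hypothesis P_inj : injective P.
Hypothesis P_mul : forall k j, P (mul k j) = P k *m P j.

Lemma mul_inj j : injective (mul ^~ j).
Proof.
move=> k k' /(congr1 (fun i => P i *m (P j)^T)) /=.
by rewrite !P_mul -!mulmxA [P j]P_sigma perm_mx_mul_tr !mulmx1 => /P_inj.
Qed.

Lemma rank_pvalue_mul j v :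
  rank_pvalue (P j *m v) =
  (\sum_(k < K.+1) (S (P j *m v) <= S (P k *m v))%R%:R) / (K.+1)%:R.
Proof.
rewrite [in RHS](reindex_inj (@mul_inj j)) /=; congr (_ / _).
by apply: eq_bigr => k _; rewrite P_mul mulmxA.
Qed.

Lemma sum_rank_pvalue_orbit_le alpha v : 0 <= alpha ->
  \sum_(j < K.+1) (rank_pvalue (P j *m v) <= alpha)%R%:R <= alpha * (K.+1)%:R.
Proof.
move=> alpha0.
under eq_bigr do rewrite rank_pvalue_mul ler_pdivrMr ?ltr0Sn //.
exact: (sum_upper_rank_le (fun j => S (P j *m v)) (mulr_ge0 alpha0 (ler0n _ _))).
Qed.

Hypothesis S_meas : measurable_fun setT (S \o @tcol R n).

Lemma measurable_rank_pvalue : measurable_fun setT (rank_pvalue \o @tcol R n).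
Proof.
apply: measurable_funM => //; apply: measurable_sum => k.
apply: measurable_fun_ler_natr => //.
rewrite (_ : (fun t => _) = S \o @tcol R n \o permute_tuple (sigma k)).
  exact: measurableT_comp (measurable_permute_tuple _).
by apply/funext => t /=; rewrite tcol_permute P_sigma.
Qed.

Lemma rank_pvalue_valid d (Omega : measurableType d) (Pr : probability Omega R)
    (eps : Omega -> n.-tuple R) (alpha : R) :
  measurable_fun setT eps -> exchangeable Pr eps -> 0 <= alpha ->
  (Pr [set w | (rank_pvalue (tcol (eps w)) <= alpha)%R] <= alpha%:E)%E.
Proof.
move=> eps_meas eps_exch alpha0.
pose A := [set t : n.-tuple R | rank_pvalue (tcol t) <= alpha].
have mA : measurable A := measurable_ler_set alpha measurable_rank_pvalue.
(* The events [B j] all have the probability of [eps @^-1` A], while at most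
   alpha (K + 1) of them occur at any given outcome. *)
pose B j := (permute_tuple (sigma j) \o eps) @^-1` A.
have mB j : measurable (B j).
  rewrite -[B j]setTI.
  exact: (measurableT_comp (measurable_permute_tuple _) eps_meas) measurableT _ mA.
have indicB w j :
    \1_(B j) w = (rank_pvalue (P j *m tcol (eps w)) <= alpha)%R%:R :> R.
  by rewrite indicE /B /A /in_mem /= /in_set asboolb /= tcol_permute -P_sigma.
have : (\sum_(j < K.+1) Pr (B j) <= (alpha * (K.+1)%:R)%:E)%E.
  apply: sum_probability_le => // w.
  under eq_bigr do rewrite indicB.
  exact: sum_rank_pvalue_orbit_le.
have PrB j : Pr (B j) = Pr (eps @^-1` A) by rewrite -eps_exch.
under eq_bigr do rewrite PrB.
rewrite (_ : [set w | _] = eps @^-1` A) //.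
move: (probability_le1 Pr (mB ord0)); rewrite PrB.
case: (Pr (eps @^-1` A)) => [r _| // | _ _]; last exact: leNye.
by rewrite sumEFin sumr_const card_ord !lee_fin -[r *+ _]mulr_natr ler_pM2r.
Qed.

End RankTest.

Lemma perp_submx_mulmx0 {R : fieldType} m n r p (A : 'M[R]_(m, n)) (Q : 'M[R]_n)
    (V : 'M[R]_(n, r)) (X : 'M[R]_(n, p)) :
  X^T *m V = 0 -> Q^T *m Q = 1%:M -> (A <= (Q *m V)^T)%MS -> A *m (Q *m X) = 0.
Proof.
move=> XV QQ /submxP[D ->].
rewrite trmx_mul -!mulmxA (mulmxA Q^T) QQ mul1mx.
by rewrite -[V^T *m X]trmxK trmx_mul trmxK XV trmx0 mulmx0.
Qed.

Section ResidualTest.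
Context {R : realType} (n m K : nat) (T : 'cV[R]_m -> 'cV[R]_m -> R).
Variables (P : 'I_K.+1 -> 'M[R]_n) (Vt : 'I_K.+1 -> 'M[R]_(n, m)) (Z : 'cV[R]_n).

Lemma Tmin_le_Tobs Y k0 k : k != ord0 -> Tmin T Vt Z Y k0 <= Tobs T Vt Z Y k.
Proof. by move=> k_n0; rewrite /Tmin (bigD1 k) //= ge_min lexx. Qed.

Lemma Tmin_le_Tmin Y k0 k1 : k1 != ord0 -> Tmin T Vt Z Y k0 <= Tmin T Vt Z Y k1.
Proof.
move=> k1_n0; rewrite [leRHS]/Tmin.
apply: (big_ind (fun x => Tmin T Vt Z Y k0 <= x)); first exact: Tmin_le_Tobs.
  by move=> x y hx hy; rewrite le_min hx hy.
by move=> k; exact: Tmin_le_Tobs.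
Qed.

Lemma Tmin_congr Y1 Y2 k0 : k0 != ord0 ->
  (forall k, k != ord0 -> (Vt k)^T *m Y1 = (Vt k)^T *m Y2) ->
  Tmin T Vt Z Y1 k0 = Tmin T Vt Z Y2 k0.
Proof.
by move=> k0_n0 eqY; rewrite /Tmin /Tobs eqY //; apply: eq_bigr => k /eqY ->.
Qed.

Hypothesis T_meas :
  measurable_fun [set: m.-tuple R * m.-tuple R] (fun uv => T (tcol uv.1) (tcol uv.2)).

Lemma measurable_Tobs (Q : 'M[R]_n) k :
  measurable_fun setT (fun t => Tobs T Vt Z (Q *m tcol t) k).
Proof.
by rewrite /Tobs; under eq_fun do rewrite mulmxA; exact: measurable_fun_partial_mulmx.
Qed.

Lemma measurable_Tmin k0 : measurable_fun setT (fun t => Tmin T Vt Z (tcol t) k0).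
Proof.
under eq_fun do rewrite -[tcol _]mul1mx.
by apply: measurable_fun_bigmin => [|k]; exact: measurable_Tobs.
Qed.

Lemma measurable_rpt_pvalue :
  measurable_fun setT (fun t => rpt_pvalue T P Vt Z (tcol t)).
Proof.
apply: measurable_funM => //; apply: measurable_funD => //.
under eq_fun do rewrite big_mkcond /=.
apply: measurable_sum => k; case: (k != ord0) => //.
apply: measurable_fun_ler_natr; first exact: measurable_Tmin.
exact: measurable_Tobs.
Qed.

Hypothesis P0 : P ord0 = 1%:M.

Lemma rank_pvalue_le_rpt_pvalue v :
  rank_pvalue P (fun u => Tmin T Vt Z u ord_max) v <= rpt_pvalue T P Vt Z v.
Proof.
rewrite /rank_pvalue /rpt_pvalue ler_pM2r ?invr_gt0 ?ltr0Sn //.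
rewrite (bigD1 ord0) //= P0 mul1mx lexx lerD2l; apply: ler_sum => k k_n0.
have max_n0 : ord_max != ord0 :> 'I_K.+1.
  by rewrite -val_eqE /= -lt0n (leq_trans _ (leq_ord k)) // lt0n.
have [h|_] := boolP (Tmin T Vt Z v ord_max <= _); last by rewrite ler0n.
suff -> : Tmin T Vt Z v k <= Tobs T Vt Z (P k *m v) k by [].
exact: le_trans (Tmin_le_Tmin _ _ max_n0) (le_trans h (Tmin_le_Tobs _ _ k_n0)).
Qed.

Variables (p r : nat) (X : 'M[R]_(n, p)) (V0 : 'M[R]_(n, r)).
Hypothesis V0_perp : X^T *m V0 = 0.
Hypothesis P_orth : forall k, (P k)^T *m P k = 1%:M.
Hypothesis Vt_sub0 : forall k, k != ord0 -> ((Vt k)^T <= V0^T)%MS.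
Hypothesis Vt_subk : forall k, k != ord0 -> ((Vt k)^T <= (P k *m V0)^T)%MS.

Lemma rpt_pvalue_addX beta e :
  rpt_pvalue T P Vt Z (X *m beta + e) = rpt_pvalue T P Vt Z e.
Proof.
have VtX k : k != ord0 -> (Vt k)^T *m X = 0.
  move=> k_n0; rewrite -[X]mul1mx.
  by apply: perp_submx_mulmx0 V0_perp _ _; rewrite ?trmx1 ?mulmx1 ?mul1mx ?Vt_sub0.
have VtPX k : k != ord0 -> (Vt k)^T *m (P k *m X) = 0.
  by move=> k_n0; exact: perp_submx_mulmx0 V0_perp (P_orth k) (Vt_subk k_n0).
rewrite /rpt_pvalue; congr ((1 + _) / _); apply: eq_bigr => k k_n0.
rewrite (@Tmin_congr _ e) // => [|k' k'_n0]; last first.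
  by rewrite mulmxDr mulmxA VtX // mul0mx add0r.
by rewrite !mulmxDr (mulmxA (P k) X beta) mulmxA VtPX // mul0mx add0r.
Qed.

End ResidualTest.

Unset Implicit Arguments.

Theorem theorem1 (R : realType) (n p K : nat)
  (hp : (0 < p)%N) (hpn : (2 * p < n)%N)
  (X : 'M[R]_(n, p)) (Z : 'cV[R]_n) (beta : 'cV[R]_p) (b : R)
  (d : measure_display) (Omega : measurableType d) (Pr : probability Omega R)
  (eps : Omega -> n.-tuple R)
  (eps_meas : measurable_fun [set: Omega] eps)
  (eps_exch : exchangeable Pr eps)
  (P : 'I_K.+1 -> 'M[R]_n)
  (P0 : P ord0 = 1%:M)
  (P_perm : forall k, exists s : 'S_n, P k = perm_mx s)
  (P_inj : injective P)
  (P_closed : forall i j, exists k, P k = P i *m P j)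
  (T : 'cV[R]_(n - 2 * p) -> 'cV[R]_(n - 2 * p) -> R)
  (T_meas : measurable_fun [set: (n - 2 * p).-tuple R * (n - 2 * p).-tuple R]
              (fun uv => T (tcol uv.1) (tcol uv.2)))
  (V0 : 'M[R]_(n, n - p))
  (V0_orth : V0^T *m V0 = 1%:M)
  (V0_perp : X^T *m V0 = 0)
  (Vt : 'I_K.+1 -> 'M[R]_(n, n - 2 * p))
  (Vt_orth : forall k, k != ord0 -> (Vt k)^T *m Vt k = 1%:M)
  (Vt_sub0 : forall k, k != ord0 -> ((Vt k)^T <= V0^T)%MS)
  (Vt_subk : forall k, k != ord0 -> ((Vt k)^T <= (P k *m V0)^T)%MS)
  (hb : b = 0) :
  let Y := fun w : Omega => X *m beta + b *: Z + tcol (eps w) in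
  let phi := fun w : Omega => rpt_pvalue T P Vt Z (Y w) in
  forall alpha : R, 0 <= alpha <= 1 ->
    (Pr [set w | (phi w <= alpha)%R] <= alpha%:E)%E.
Proof.
move=> Y phi alpha /andP[alpha0 _].
have [sigma P_sigma] := choice P_perm.
have /choice[mul P_mul] : forall k, exists f, forall j, P (f j) = P k *m P j.
  by move=> k; have [f Pf] := choice (P_closed k); exists f.
have P_orth k : (P k)^T *m P k = 1%:M by rewrite P_sigma tr_perm_mx_mul.
pose S v := Tmin T Vt Z v ord_max.
have S_meas : measurable_fun setT (S \o @tcol R n).
  exact: measurable_Tmin Vt Z T_meas ord_max.
have phiE : phi = fun w => rpt_pvalue T P Vt Z (tcol (eps w)).
  apply/funext => w; rewrite /phi /Y hb scale0r addr0.
  exact (rpt_pvalue_addX T Z V0_perp P_orth Vt_sub0 Vt_subk beta (tcol (eps w))).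
apply: le_trans _
  (rank_pvalue_valid P_sigma P_inj P_mul S_meas eps_meas eps_exch alpha0).
apply: le_measure; rewrite ?inE ?phiE.
- apply: measurable_ler_set.
  exact: measurableT_comp (measurable_rpt_pvalue P Vt Z T_meas) eps_meas.
- apply: measurable_ler_set.
  exact: measurableT_comp (measurable_rank_pvalue P_sigma S_meas) eps_meas.
- by move=> w /=; apply: le_trans (rank_pvalue_le_rpt_pvalue T Vt Z P0 _).
Qed.
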